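(* For all integers $n\ge1$ and $q\ge0$, $(q+1)^n-(n+1)q^n \le A(n,q)\le (q+1)^n$.
   Context: $A(n,q)$ is the Eulerian number, the number of permutations of $\{1,\dots,n\}$ with exactly $q$ ascents, with $A(n,q)=0$ if $q\ge n$. *)

From mathcomp Require Import all_boot all_order all_algebra all_fingroup.
Set Implicit Arguments. Unset Strict Implicit. Unset Printing Implicit Defensive.

Definition ascents (n : nat) (s : 'S_n) : nat :=
  #|[set i : 'I_n | [exists j : 'I_n, (val j == (val i).+1) && (s i < s j)]]|.

(* Eulerian number A(n,q): number of permutations of {1..n} with exactly
   q ascents (automatically 0 when q >= n, for n >= 1). *)
Definition eulerian (n q : nat) : nat :=
  #|[set s : 'S_n | ascents s == q]|.

From mathcomp Require Import all_boot all_order all_algebra all_fingroup.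
From mathcomp Require Import zify.
Set Implicit Arguments. Unset Strict Implicit. Unset Printing Implicit Defensive.

(* Sorting the positions of a word f : {0..n-1} -> {0..q} by value, breaking
   ties by decreasing position, gives a permutation s_f along which f is weakly
   increasing, strictly at every ascent.  Hence s_f has at most q ascents, and
   the slack "value minus number of earlier ascents" is nondecreasing along s_f.
   A permutation s with q ascents is s_f for exactly one word f, the one giving
   s(i) the number of ascents of s before position i: so A(n,q) <= (q+1)^n.
   When s_f has q ascents the slack vanishes everywhere, so f is that word and
   f |-> s_f is injective on such words.  When s_f has fewer ascents, subtracting
   1 from f where the slack is positive (a final segment along s_f) gives a word
   with values in {0..q-1} sorting to the same permutation, and together with
   the first position of positive slack it determines f.
   So (q+1)^n <= A(n,q) + (n+1) q^n. *)

Lemma find_iota_upclosed (P : pred nat) n i :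
  (forall j k, j <= k < n -> P j -> P k) -> i < n ->
  P i = (find P (iota 0 n) <= i).
Proof.
move=> P_up lt_in; set K := find P (iota 0 n).
have [lt_iK|le_Ki] := ltnP i K.
  have := before_find 0 lt_iK.
  by rewrite nth_iota ?add0n // ?(ltn_trans lt_iK) // => ->.
have lt_Kn : K < n by apply: leq_ltn_trans le_Ki lt_in.
have := nth_find 0 (_ : has P (iota 0 n)); rewrite has_find size_iota -/K.
by rewrite nth_iota // add0n => /(_ lt_Kn) PK; apply: P_up PK; rewrite le_Ki.
Qed.

Lemma card_ord_lt N i : i <= N -> #|[set j : 'I_N | j < i]| = i.
Proof.
move=> le_iN; have -> : [set j : 'I_N | j < i] = widen_ord le_iN @: setT.
  apply/setP => j; rewrite !inE; apply/idP/imsetP => [lt_ji|[k _ ->]].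
    by exists (Ordinal lt_ji) => //; apply: val_inj.
  by rewrite /= ltn_ord.
by rewrite card_imset ?cardsT ?card_ord // => a b /(congr1 val) /= /val_inj.
Qed.

Section SortPermutation.
Variable N : nat.
Implicit Types (w : 'I_N -> nat) (u v : 'I_N) (s : 'S_N).

(* Ties are broken by decreasing position, so that equal weights never create
   an ascent of the sorting permutation. *)
Definition wlt w u v := (w u < w v) || ((w u == w v) && (v < u)).

Lemma wltnn w u : wlt w u u = false.
Proof. by rewrite /wlt ltnn eqxx ltnn. Qed.

Lemma wlt_trans w u v x : wlt w u v -> wlt w v x -> wlt w u x.
Proof.
rewrite /wlt => /orP[h1|/andP[/eqP e1 h1]] /orP[h2|/andP[/eqP e2 h2]]; apply/orP.
- by left; apply: ltn_trans h1 h2.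
- by left; rewrite -e2.
- by left; rewrite e1.
- by right; rewrite e1 e2 eqxx /=; apply: ltn_trans h2 h1.
Qed.

Lemma wlt_total w u v : u != v -> wlt w u v || wlt w v u.
Proof.
move=> neq_uv; rewrite /wlt; case: (ltngtP (w u) (w v)) => //= _.
by case: ltngtP => // /val_inj eq_uv; rewrite eq_uv eqxx in neq_uv.
Qed.

Definition rank w v := #|[set u | wlt w u v]|.

Lemma rank_ltn w v : rank w v < N.
Proof.
have: [set u | wlt w u v] \subset [set~ v].
  by apply/subsetP => u; rewrite !inE; apply: contraTneq => ->; rewrite wltnn.
by move/subset_leq_card; rewrite cardsC1 card_ord /rank; have := ltn_ord v; lia.
Qed.

Lemma ltn_rank w u v : (rank w u < rank w v) = wlt w u v.
Proof.
have mono x y : wlt w x y -> rank w x < rank w y.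
  move=> lt_xy; apply: proper_card; apply/properP; split.
    by apply/subsetP => z; rewrite !inE => lt_zx; apply: wlt_trans lt_zx lt_xy.
  by exists x; rewrite !inE ?wltnn.
apply/idP/idP => [lt_uv|]; last exact: mono.
have [eq_uv|neq_uv] := eqVneq u v; first by rewrite eq_uv ltnn in lt_uv.
case/orP: (wlt_total w neq_uv) => // /mono lt_vu.
by have := ltn_trans lt_uv lt_vu; rewrite ltnn.
Qed.

Lemma rank_inj w : injective (fun v => Ordinal (rank_ltn w v)).
Proof.
move=> u v [] eq_rank; apply/eqP; apply: contraT => neq_uv.
by case/orP: (wlt_total w neq_uv); rewrite -ltn_rank eq_rank ltnn.
Qed.

Definition sortperm w : 'S_N := (perm (@rank_inj w))^-1.

Lemma rank_sortperm w i : rank w (sortperm w i) = i.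
Proof.
have := permE (@rank_inj w) (sortperm w i).
by rewrite permKV => /(congr1 val) /= <-.
Qed.

Lemma sortperm_sorted w (i j : 'I_N) :
  i < j -> wlt w (sortperm w i) (sortperm w j).
Proof. by rewrite -ltn_rank !rank_sortperm. Qed.

Lemma sorted_sortperm w s :
  (forall i j : 'I_N, i < j -> wlt w (s i) (s j)) -> s = sortperm w.
Proof.
move=> s_sorted; have rank_s i : rank w (s i) = i.
  rewrite /rank; have -> : [set u | wlt w u (s i)] = s @: [set j : 'I_N | j < i].
    apply/setP => u; rewrite !inE; apply/idP/imsetP => [lt_u|[j]]; last first.
      by rewrite inE => lt_ji ->; apply: s_sorted.
    exists (s^-1 u)%g; last by rewrite permKV.
    rewrite inE; case: ltngtP => // [lt_is|/val_inj eq_si].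
      by have := wlt_trans lt_u (s_sorted _ _ lt_is); rewrite permKV wltnn.
    by rewrite -eq_si permKV wltnn in lt_u.
  by rewrite card_imset ?card_ord_lt 1?ltnW //; apply: perm_inj.
apply/permP => i; apply: (@perm_inj _ (perm (@rank_inj w))).
by rewrite /sortperm permKV permE; apply: val_inj; rewrite /= rank_s.
Qed.

End SortPermutation.

Section Ascents.
Variable n' : nat.
Local Notation N := n'.+1.
Implicit Types (w : 'I_N -> nat) (s : 'S_N).

Definition asc s i : bool := (i < n') && (s (inord i) < s (inord i.+1)).
Definition nasc s m := \sum_(i < m) asc s i.

Lemma nascS s m : nasc s m.+1 = nasc s m + asc s m.
Proof. by rewrite /nasc big_ord_recr. Qed.

Lemma leq_nasc s m k : m <= k -> nasc s m <= nasc s k.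
Proof.
move: m k; apply: (@homo_leq _ (nasc s) leq) => [//||j]; first exact: leq_trans.
by rewrite nascS leq_addr.
Qed.

Lemma ascents_nasc s : ascents s = nasc s n'.
Proof.
have -> : nasc s n' = nasc s N by rewrite nascS /asc ltnn addn0.
rewrite /ascents -sum1_card big_mkcond /nasc /=; apply: eq_bigr => i _.
rewrite inE /asc; case: existsP => [[j /andP[/eqP /= eq_j lt_ij]]|no_j].
  have lt_iN : i.+1 < N by rewrite -eq_j.
  have -> : (inord i.+1 : 'I_N) = j by apply: val_inj; rewrite /= inordK.
  by rewrite inord_val lt_ij -ltnS lt_iN.
case: andP => // -[lt_in lt_s]; case: no_j; exists (inord i.+1).
by rewrite inord_val in lt_s; rewrite /= inordK ?eqxx.
Qed.

Definition wseq w s i := w (s (inord i)).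

Lemma wseq_permV w s v : wseq w s (s^-1 v)%g = w v.
Proof. by rewrite /wseq inord_val permKV. Qed.

Definition compatible w s :=
  forall i, i < n' -> wseq w s i + asc s i <= wseq w s i.+1.

Lemma compatible_ext w1 w2 s : w1 =1 w2 -> compatible w1 s -> compatible w2 s.
Proof.
by move=> eq_w compat_w i lt_in; rewrite /wseq -!eq_w; apply: compat_w.
Qed.

Lemma compatible_wlt w s i :
  compatible w s -> i < n' -> wlt w (s (inord i)) (s (inord i.+1)).
Proof.
move=> compat_w lt_in; have := compat_w i lt_in; rewrite /wseq /asc lt_in /= /wlt.
case: ltnP => [lt_s|le_s]; first by rewrite addn1 => ->.
have lt_s : s (inord i.+1) < s (inord i).
  rewrite ltn_neqAle le_s andbT.
  by apply/eqP => /val_inj /perm_inj /(congr1 val) /=; rewrite !inordK //; lia.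
by rewrite addn0 leq_eqVlt => /orP[/eqP ->|->] //; rewrite eqxx lt_s orbT.
Qed.

Lemma compatible_sorted w s : compatible w s -> s = sortperm w.
Proof.
move=> compat_w; apply: sorted_sortperm => i j lt_ij.
rewrite -(inord_val i) -(inord_val j).
apply: (@homo_ltn_in _ [pred k | k < N] (fun k => s (inord k)) (wlt w)) => //.
- by move=> y x z; apply: wlt_trans.
- by move=> a b _ lt_bN k /andP[_ lt_kb]; apply: ltn_trans lt_kb lt_bN.
- by move=> k _; rewrite inE ltnS; apply: compatible_wlt.
- by rewrite inE ltn_ord.
- by rewrite inE ltn_ord.
Qed.

Lemma compatible_sortperm w : compatible w (sortperm w).
Proof.
move=> i lt_in; have := @sortperm_sorted _ w (inord i) (inord i.+1).
rewrite !inordK ?ltnS ?(ltnW lt_in) // => /(_ (ltnSn _)).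
rewrite /wlt /wseq /asc lt_in /=; case/orP=> [lt_w|/andP[/eqP -> lt_s]].
  by case: (_ < _); rewrite ?addn1 ?addn0 // ltnW.
by rewrite ltnNge (ltnW lt_s) addn0.
Qed.

Lemma nasc_le_wseq w s m : compatible w s -> m <= n' -> nasc s m <= wseq w s m.
Proof.
move=> compat_w; elim: m => [|m IHm] lt_mn; first by rewrite /nasc big_ord0.
rewrite nascS; apply: leq_trans (compat_w m lt_mn); rewrite leq_add2r.
exact/IHm/ltnW.
Qed.

Lemma ascents_le w s q : compatible w s -> (forall v, w v <= q) -> ascents s <= q.
Proof.
move=> compat_w le_wq; rewrite ascents_nasc.
exact: leq_trans (nasc_le_wseq compat_w (leqnn _)) (le_wq _).
Qed.

Definition slack w s i := wseq w s i - nasc s i.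

Lemma slack_mono w s i j : compatible w s -> i <= j -> j <= n' ->
  slack w s i <= slack w s j.
Proof.
move=> compat_w le_ij le_jn.
apply: (@homo_leq_in _ [pred k | k <= n'] (slack w s) leq) => //.
- exact: leq_trans.
- by move=> a b _ le_bn k /andP[_ lt_kb]; apply: leq_trans (ltnW lt_kb) le_bn.
- move=> k _; rewrite inE => lt_kn; have := compat_w k lt_kn.
  have := nasc_le_wseq compat_w (ltnW lt_kn); rewrite /slack nascS; lia.
- exact: leq_trans le_ij le_jn.
Qed.

Definition ascword s v := nasc s (s^-1 v)%g.

Lemma wseq_ascword s i : i <= n' -> wseq (ascword s) s i = nasc s i.
Proof. by move=> le_in; rewrite /wseq /ascword permK inordK. Qed.

Lemma compatible_ascword s : compatible (ascword s) s.
Proof. by move=> i lt_in; rewrite !wseq_ascword ?nascS // ltnW. Qed.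

Lemma compatible_eq_ascword w s :
  compatible w s -> (forall v, w v <= ascents s) -> w =1 ascword s.
Proof.
move=> compat_w le_w v; rewrite -(wseq_permV w s v) /ascword.
have le_vn : (s^-1 v)%g <= n' by apply: leq_ord.
have := slack_mono compat_w le_vn (leqnn _); have := nasc_le_wseq compat_w le_vn.
by have := le_w (s (inord n')); rewrite ascents_nasc /slack /wseq; lia.
Qed.

Definition lowered w s v := w v - (0 < slack w s (s^-1 v)%g).

Lemma compatible_lowered w s : compatible w s -> compatible (lowered w s) s.
Proof.
move=> compat_w i lt_in.
have wseq_lowered j : j <= n' ->
    wseq (lowered w s) s j = wseq w s j - (0 < slack w s j).
  by move=> le_jn; rewrite {1}/wseq /lowered permK inordK.
rewrite !wseq_lowered ?(ltnW lt_in) //; have := compat_w i lt_in.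
have := nasc_le_wseq compat_w (ltnW lt_in).
have := slack_mono compat_w (leqnSn i) lt_in.
rewrite /slack nascS; case: (ltnP 0 (wseq w s i - nasc s i)) => /=;
  case: (ltnP 0 (wseq w s i.+1 - (nasc s i + asc s i))) => /=;
  case: (asc s i) => /=; lia.
Qed.

Lemma lowered_lt w s q : compatible w s -> (forall v, w v <= q) ->
  ascents s < q -> forall v, lowered w s v < q.
Proof.
move=> compat_w le_wq lt_asc v; rewrite /lowered /slack wseq_permV.
have := leq_nasc s (leq_ord (s^-1 v)%g); rewrite -ascents_nasc.
by have := le_wq v; case: ltnP => /=; lia.
Qed.

Definition threshold w s := find (fun i => 0 < slack w s i) (iota 0 N).

Lemma threshold_le w s : threshold w s <= N.
Proof. by rewrite -[leqRHS](size_iota 0) find_size. Qed.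

Lemma lowered_threshold w s v : compatible w s ->
  w v = lowered w s v + (threshold w s <= (s^-1 v)%g).
Proof.
move=> compat_w; rewrite /lowered /threshold -find_iota_upclosed //.
  rewrite /slack wseq_permV; case: ltnP => [pos|_]; last by rewrite subn0 addn0.
  by rewrite subnK //; apply: leq_trans pos (leq_subr _ _).
by move=> j k /andP[le_jk lt_kN] /leq_trans; apply; apply: slack_mono.
Qed.

Lemma lowered_inj w1 w2 s1 s2 : compatible w1 s1 -> compatible w2 s2 ->
  lowered w1 s1 =1 lowered w2 s2 -> threshold w1 s1 = threshold w2 s2 ->
  w1 =1 w2.
Proof.
move=> compat1 compat2 eq_low eq_thr v.
have eq_s : s1 = s2.
  rewrite (compatible_sorted (compatible_lowered compat1)).
  apply/esym/compatible_sorted/(compatible_ext (fsym eq_low)).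
  exact: compatible_lowered.
rewrite (lowered_threshold v compat1) (lowered_threshold v compat2).
by rewrite eq_low eq_thr eq_s.
Qed.

End Ascents.

Definition wt n k (f : {ffun 'I_n -> 'I_k}) (v : 'I_n) : nat := f v.

Section Words.
Variables n' q : nat.
Local Notation word := {ffun 'I_n'.+1 -> 'I_q.+1}.
Implicit Types (f : word) (s : 'S_n'.+1).

Lemma wt_le f v : wt f v <= q.
Proof. by rewrite -ltnS; apply: ltn_ord. Qed.

Lemma ascents_sortperm_wt f : ascents (sortperm (wt f)) <= q.
Proof. exact: ascents_le (compatible_sortperm _) (wt_le f). Qed.

Lemma eulerian_leq : eulerian n'.+1 q <= q.+1 ^ n'.+1.
Proof.
pose F s : word := [ffun v => inord (ascword s v)].
have wt_F s : ascents s = q -> wt (F s) =1 ascword s.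
  move=> asc_s v; rewrite /wt ffunE inordK // ltnS -asc_s ascents_nasc.
  exact/leq_nasc/leq_ord.
have F_inj : {in [set s | ascents s == q] &, injective F}.
  move=> s1 s2; rewrite !inE => /eqP asc1 /eqP asc2 eq_F.
  have sortperm_F s : ascents s = q -> s = sortperm (wt (F s)).
    move=> asc_s; apply/compatible_sorted/(compatible_ext (fsym (wt_F s asc_s))).
    exact: compatible_ascword.
  by rewrite (sortperm_F s1) // (sortperm_F s2) // eq_F.
rewrite /eulerian -(card_in_imset F_inj); apply: leq_trans (max_card _) _.
by rewrite card_ffun !card_ord.
Qed.

Lemma card_words_q_ascents :
  #|[set f : word | ascents (sortperm (wt f)) == q]| <= eulerian n'.+1 q.
Proof.
have wt_ascword f :
    ascents (sortperm (wt f)) = q -> wt f =1 ascword (sortperm (wt f)).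
  move=> asc_f; apply: compatible_eq_ascword (compatible_sortperm _) _.
  by rewrite asc_f; apply: wt_le.
have sortperm_inj : {in [set f | ascents (sortperm (wt f)) == q] &,
                     injective (fun f => sortperm (wt f))}.
  move=> f1 f2; rewrite !inE => /eqP asc1 /eqP asc2 eq_s.
  apply/ffunP => v; apply: val_inj; change (wt f1 v = wt f2 v).
  by rewrite (wt_ascword f1) // (wt_ascword f2) // eq_s.
rewrite -(card_in_imset sortperm_inj).
by apply/subset_leq_card/subsetP => s /imsetP[f]; rewrite !inE => asc_f ->.
Qed.

End Words.

Lemma card_words_few_ascents n' q :
  #|~: [set f : {ffun 'I_n'.+1 -> 'I_q.+1} | ascents (sortperm (wt f)) == q]|
    <= n'.+2 * q ^ n'.+1.
Proof.
case: q => [|q].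
  rewrite exp0n // muln0 leqn0 cards_eq0; apply/eqP/setP => f.
  by rewrite !inE -leqn0 ascents_sortperm_wt.
pose low (f : {ffun 'I_n'.+1 -> 'I_q.+2}) := lowered (wt f) (sortperm (wt f)).
have low_lt (f : {ffun 'I_n'.+1 -> 'I_q.+2}) :
    ascents (sortperm (wt f)) != q.+1 -> forall u, low f u < q.+1.
  move=> asc_f; apply: lowered_lt (compatible_sortperm _) (wt_le f) _.
  by rewrite ltn_neqAle asc_f ascents_sortperm_wt.
pose G (f : {ffun 'I_n'.+1 -> 'I_q.+2}) : 'I_n'.+2 * {ffun 'I_n'.+1 -> 'I_q.+1} :=
  (inord (threshold (wt f) (sortperm (wt f))), [ffun v => inord (low f v)]).
have G_inj : {in ~: [set f | ascents (sortperm (wt f)) == q.+1] &, injective G}.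
  move=> f1 f2; rewrite !inE => asc1 asc2 [eq_thr eq_low].
  apply/ffunP => v; apply: val_inj; change (wt f1 v = wt f2 v).
  apply: (lowered_inj (compatible_sortperm _) (compatible_sortperm _)).
    move=> u; have := congr1 (fun g : {ffun _ -> 'I_q.+1} => val (g u)) eq_low.
    by rewrite !ffunE /= !inordK ?low_lt.
  by have := congr1 val eq_thr; rewrite /= !inordK // ltnS threshold_le.
rewrite -(card_in_imset G_inj); apply: leq_trans (max_card _) _.
by rewrite card_prod card_ffun !card_ord.
Qed.

Import GRing.Theory Num.Theory.
Local Open Scope ring_scope.

Theorem mainTheorem18 (n q : nat) (hn : (1 <= n)%N) :
  ((q + 1) ^ n)%:Z - ((n + 1) * q ^ n)%:Z <= (eulerian n q)%:Z /\
  (eulerian n q <= (q + 1) ^ n)%N.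
Proof.
case: n hn => // n _; rewrite !addn1; split; last exact: eulerian_leq.
rewrite lerBlDr -PoszD lez_nat.
have -> : (q.+1 ^ n.+1)%N = #|{: {ffun 'I_n.+1 -> 'I_q.+1}}|.
  by rewrite card_ffun !card_ord.
rewrite -(cardsC [set f | ascents (sortperm (wt f)) == q]).
exact: leq_add (card_words_q_ascents _ _) (card_words_few_ascents _ _).
Qed.
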